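(* Let $\Bbbk$ be an algebraically closed field of characteristic zero and write $C_2\times C_2=\{e,g_1,g_2,g_3\}$; equip $\Bbbk(C_2\times C_2)$ with its group-algebra Frobenius structure. Then the extended structures $(\phi,\theta)$ on $\Bbbk(C_2\times C_2)$ are exactly those of the following forms, where $\{i,j,\ell\}=\{1,2,3\}$ and signs are chosen independently: (a) $\phi=\mathrm{id}$ and $\theta\in\{\pm2e,\ \pm2g_i,\ \pm(e+g_\ell)\pm(g_i-g_j),\ \pm(e-g_\ell)\pm(g_i+g_j)\}$; (b) $\phi(g_i)=-g_i$, $\phi(g_j)=-g_j$, $\phi(g_\ell)=g_\ell$, and $\theta=0$; (c) $\phi(g_i)=g_j$, $\phi(g_j)=g_i$, $\phi(g_\ell)=g_\ell$, and $\theta\in\{\pm(e+g_\ell),\pm(g_i+g_j)\}$; (d) $\phi(g_i)=-g_j$, $\phi(g_j)=-g_i$, $\phi(g_\ell)=g_\ell$, and $\theta\in\{\pm(e-g_\ell),\pm(g_i-g_j)\}$.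
   Context: For a finite group $G$ with identity $e$, $\Bbbk G$ carries the Frobenius structure with group-algebra multiplication, unit $e$, comultiplication $\Delta(g)=\sum_{h\in G}gh\otimes h^{-1}$ and counit $\varepsilon(g)=\delta_{g,e}$. A Frobenius algebra over $\Bbbk$ is $(A,m,u,\Delta,\varepsilon)$ with $(A,m,u)$ an associative unital algebra, $(A,\Delta,\varepsilon)$ a coassociative counital coalgebra, and $(a\otimes1)\Delta(b)=\Delta(ab)=\Delta(a)(1\otimes b)$. A Frobenius algebra morphism is both an algebra and coalgebra morphism. An extended structure is $(\phi,\theta)$, $\phi:A\to A$ linear, $\theta\in A$, with (i) $\phi$ a Frobenius morphism, $\phi^2=\mathrm{id}$; (ii) $\phi(\theta a)=\theta a$ for all $a$; (iii) $m(\phi\otimes\mathrm{id})\Delta(1_A)=\theta^2$. *)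

From HB Require Import structures.
From mathcomp Require Import all_boot all_order all_algebra.
Set Implicit Arguments. Unset Strict Implicit. Unset Printing Implicit Defensive.
Import Order.TTheory GRing.Theory.
Local Open Scope ring_scope.

(* The Klein four group C2 x C2, written additively: e = 0,
   g1 = (1,0), g2 = (0,1), g3 = (1,1). *)
Notation V := ('Z_2 * 'Z_2)%type.

Section GroupAlgebra.
Variable k : fieldType.

(* The group algebra k V, as finitely supported functions V -> k
   (coefficient vectors on the basis V). *)
Definition A := {ffun V -> k}.
(* A (x) A, identified with functions on V x V. *)
Definition AA := {ffun (V * V) -> k}.

Definition delta (g : V) : A := [ffun x : V => (x == g)%:R].
Definition sc (c : k) (a : A) : A := [ffun x : V => c * a x].
Definition scT (c : k) (t : AA) : AA := [ffun p : V * V => c * t p].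
Local Notation "c *: a" := (sc c a) : ring_scope.
Local Notation "c *:: t" := (scT c t) (at level 40) : ring_scope.

Definition tens (a b : A) : AA := [ffun p : V * V => a p.1 * b p.2].

(* multiplication: ([g] * [h]) = [g + h], extended bilinearly *)
Definition gmul (a b : A) : A := [ffun x : V => \sum_(y : V) a y * b (x - y)].
Definition gunit : A := delta 0.
Definition comul (a : A) : AA :=
  \sum_(g : V) a g *:: \sum_(h : V) tens (delta (g + h)) (delta (- h)).
Definition counit (a : A) : k := \sum_(g : V) a g * (g == 0)%:R.

Definition mT (t : AA) : A := \sum_(p : V * V) t p *: gmul (delta p.1) (delta p.2).
Definition tmap (f f' : A -> A) (t : AA) : AA :=
  \sum_(p : V * V) t p *:: tens (f (delta p.1)) (f' (delta p.2)).

Definition is_linear (f : A -> A) : Prop :=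
  forall (c : k) (a b : A), f (c *: a + b) = c *: f a + f b.

Definition frobenius_morphism (f : A -> A) : Prop :=
  [/\ is_linear f,
      (forall a b, f (gmul a b) = gmul (f a) (f b)),
      f gunit = gunit,
      (forall a, tmap f f (comul a) = comul (f a)) &
      (forall a, counit (f a) = counit a)].

Definition extended_structure (phi : A -> A) (theta : A) : Prop :=
  [/\ frobenius_morphism phi /\ (forall a, phi (phi a) = a),
      (forall a, phi (gmul theta a) = gmul theta a) &
      mT (tmap phi id (comul gunit)) = gmul theta theta].

Definition e : A := delta 0.
Definition gv (i : 'I_3) : V :=
  if val i == 0%N then (1, 0) else if val i == 1%N then (0, 1) else (1, 1).
(* g_1, g_2, g_3 indexed by 'I_3 = {0,1,2} *)
Definition gg (i : 'I_3) : A := delta (gv i).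

Definition sgn (b : bool) : k := (-1) ^+ b.

Definition theta_a (i j l : 'I_3) (theta : A) : Prop :=
  exists s t : bool,
    [\/ theta = sgn s *: (2%:R *: e),
        theta = sgn s *: (2%:R *: gg i),
        theta = sgn s *: (e + gg l) + sgn t *: (gg i - gg j) |
        theta = sgn s *: (e - gg l) + sgn t *: (gg i + gg j)].

Definition distinct3 (i j l : 'I_3) : Prop := [/\ i != j, j != l & i != l].

Definition lin_on_basis (phi : A -> A) (i j l : 'I_3) (pi pj pl : A) : Prop :=
  [/\ is_linear phi, phi e = e, phi (gg i) = pi, phi (gg j) = pj & phi (gg l) = pl].

Definition classification (phi : A -> A) (theta : A) : Prop :=
  ((forall a, phi a = a) /\ exists i j l, distinct3 i j l /\ theta_a i j l theta)
  \/
  (exists i j l, distinct3 i j l /\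
    [\/ lin_on_basis phi i j l (- gg i) (- gg j) (gg l) /\ theta = 0,
        lin_on_basis phi i j l (gg j) (gg i) (gg l) /\
          (exists s : bool, theta = sgn s *: (e + gg l) \/ theta = sgn s *: (gg i + gg j)) |
        lin_on_basis phi i j l (- gg j) (- gg i) (gg l) /\
          (exists s : bool, theta = sgn s *: (e - gg l) \/ theta = sgn s *: (gg i - gg j))]).

End GroupAlgebra.

(* Since 2 is invertible, the four characters of V = C2 x C2 identify k V with
   k^4, so products and the conditions on (phi, theta) can be read off Fourier
   coefficients.
   A Frobenius involution maps each g to some +-g' (an element of square e and
   counit 0); following the labels shows that it fixes some g_l and, relative to
   a labelling {i, j, l}, fixes or exchanges g_i and g_j, possibly negating both.
   These four maps are signed permutations, hence Frobenius involutions, and each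
   permutes the characters by an involution tau. As Delta(1) = sum_g g (x) g,
   condition (iii) says that the Fourier coefficients of theta have square 4 at
   the characters fixed by tau and vanish elsewhere, which also implies (ii);
   solving coefficientwise gives the listed theta. *)

From HB Require Import structures.
From mathcomp Require Import all_boot all_order all_algebra.
From mathcomp Require Import ring.
Set Implicit Arguments. Unset Strict Implicit. Unset Printing Implicit Defensive.
Import Order.TTheory GRing.Theory.
Local Open Scope ring_scope.

Definition i0 : 'I_3 := @Ordinal 3 0 isT.
Definition i1 : 'I_3 := @Ordinal 3 1 isT.
Definition i2 : 'I_3 := @Ordinal 3 2 isT.

Lemma I3_cases (i : 'I_3) : [\/ i = i0, i = i1 | i = i2].
Proof.
case: i => [[|[|[|n]]] Hn] //.
- by constructor 1; apply: val_inj.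
- by constructor 2; apply: val_inj.
- by constructor 3; apply: val_inj.
Qed.

Lemma V_cases (v : V) : [\/ v = 0, v = gv i0, v = gv i1 | v = gv i2].
Proof.
case: v => [[[|[|n]] Hn] [[|[|m]] Hm]] //.
- by constructor 1; congr pair; apply: val_inj.
- by constructor 3; congr pair; apply: val_inj.
- by constructor 2; congr pair; apply: val_inj.
- by constructor 4; congr pair; apply: val_inj.
Qed.

Lemma addVV (v : V) : v + v = 0.
Proof. by case: (V_cases v) => ->; apply/eqP. Qed.

Lemma oppV (v : V) : - v = v.
Proof. by rewrite -[LHS]add0r -(addVV v) addrK. Qed.

Lemma gv_neq0 (i : 'I_3) : gv i != 0.
Proof. by case: (I3_cases i) => ->. Qed.

Lemma gv_inj : injective gv.
Proof. by move=> i j; case: (I3_cases i) => ->; case: (I3_cases j) => ->. Qed.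

Ltac distinct3_cases i j l hd :=
  case: (I3_cases i) hd => ->; case: (I3_cases j) => ->; case: (I3_cases l) => ->;
  case=> //.

Lemma gv_add (i j l : 'I_3) : distinct3 i j l -> gv i + gv j = gv l.
Proof. by move=> hd; distinct3_cases i j l hd; move=> *; apply/eqP. Qed.

Lemma distinct3C (i j l : 'I_3) : distinct3 i j l -> distinct3 j i l.
Proof. by case=> hij hjl hil; split; rewrite // eq_sym. Qed.

Lemma distinct3_rot (i j l : 'I_3) : distinct3 i j l -> distinct3 j l i.
Proof. by case=> hij hjl hil; split; rewrite // eq_sym. Qed.

Lemma exists_distinct3 (i j : 'I_3) : i != j -> exists l, distinct3 i j l.
Proof.
by case: (I3_cases i) => ->; case: (I3_cases j) => -> // _;
  [exists i2 | exists i1 | exists i2 | exists i0 | exists i1 | exists i0].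
Qed.

Lemma exists_labelling (l : 'I_3) : exists i j, distinct3 i j l.
Proof. by case: (I3_cases l) => ->; [exists i1, i2 | exists i0, i2 | exists i0, i1]. Qed.

Lemma label_cases (i j l a : 'I_3) : distinct3 i j l -> [\/ a = i, a = j | a = l].
Proof.
move=> hd; distinct3_cases i j l hd => *; case: (I3_cases a) => ->;
  by [constructor 1 | constructor 2 | constructor 3].
Qed.

Lemma V_labelled (i j l : 'I_3) (v : V) : distinct3 i j l ->
  [\/ v = 0, v = gv i, v = gv j | v = gv l].
Proof.
move=> hd; distinct3_cases i j l hd => *; case: (V_cases v) => ->;
  by [constructor 1 | constructor 2 | constructor 3 | constructor 4].
Qed.

Lemma sumV_labelled (R : nmodType) (i j l : 'I_3) (F : V -> R) : distinct3 i j l ->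
  \sum_(v : V) F v = F 0 + F (gv i) + F (gv j) + F (gv l).
Proof.
move=> hd; have [hij hjl hil] := hd.
have [hji hlj hli] : [/\ j != i, l != j & l != i] by split; rewrite eq_sym.
rewrite (bigD1 (0 : V)) // (bigD1 (gv i)) ?gv_neq0 // (bigD1 (gv j)) /=;
  last by rewrite gv_neq0 (inj_eq gv_inj) hji.
rewrite (bigD1 (gv l)) /=; last by rewrite gv_neq0 !(inj_eq gv_inj) hli hlj.
rewrite big_pred0 ?addr0 ?addrA // => v.
by case: (V_labelled v hd) => ->; rewrite ?eqxx ?andbF.
Qed.

Lemma eqV_addr (x a b : V) : (x + a == b) = (x == b + a).
Proof. by rewrite -{1}(oppV a) subr_eq. Qed.

Section Coordinates.
Variable k : fieldType.
Local Notation A := (A k).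
Local Notation delta := (delta k).

Lemma sgn_false : sgn k false = 1. Proof. by rewrite /sgn expr0. Qed.
Lemma sgn_true : sgn k true = -1. Proof. by rewrite /sgn expr1. Qed.

Lemma sqr_eq1_sgn (y : k) : y ^+ 2 = 1 -> exists s, y = sgn k s.
Proof.
move/eqP; rewrite sqrf_eq1 => /orP[] /eqP ->.
  by exists false; rewrite sgn_false.
by exists true; rewrite sgn_true.
Qed.

Lemma sqr_eq4_sgn (y : k) : (2 : k) != 0 -> y ^+ 2 = 4 ->
  exists s, y = 2 * sgn k s.
Proof.
move=> two_neq0 y4; have [s ys] : exists s, y / 2 = sgn k s.
  by apply: sqr_eq1_sgn; rewrite expr_div_n y4 (_ : 4 = 2 ^+ 2) ?divff ?expf_neq0 //; ring.
by exists s; rewrite -ys mulrC divfK.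
Qed.

Lemma sum_delta (F : V -> k) (a : V) : \sum_v (v == a)%:R * F v = F a.
Proof.
rewrite (bigD1 a) //= eqxx mul1r big1 ?addr0 // => v /negbTE ->.
by rewrite mul0r.
Qed.

Lemma counitE (a : A) : counit a = a 0.
Proof.
rewrite /counit (eq_bigr (fun g => (g == 0)%:R * a g)) ?sum_delta //.
by move=> g _; rewrite mulrC.
Qed.

Lemma gmul_delta_r (a : A) (v x : V) : gmul a (delta v) x = a (x + v).
Proof.
rewrite ffunE (eq_bigr (fun y => (y == x + v)%:R * a y)) ?sum_delta //.
by move=> y _; rewrite ffunE subr_eq eq_sym addrC eqV_addr mulrC.
Qed.

Lemma gmul_delta (u v : V) : gmul (delta u) (delta v) = delta (u + v).
Proof.
by apply/ffunP => x; rewrite gmul_delta_r !ffunE eqV_addr.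
Qed.

Lemma sumVV (F : V * V -> k) :
  \sum_(p : V * V) F p = \sum_(a : V) \sum_(b : V) F (a, b).
Proof.
rewrite (eq_bigr (fun p : V * V => F (p.1, p.2))); last by case.
by rewrite -(pair_big predT predT (fun a b => F (a, b))).
Qed.

Lemma comulE (a : A) (q : V * V) : comul a q = a (q.1 + q.2).
Proof.
rewrite /comul sum_ffunE.
rewrite (eq_bigr (fun g => (g == q.1 + q.2)%:R * a g)) ?sum_delta //.
move=> g _; rewrite ffunE sum_ffunE mulrC; congr (_ * _).
rewrite (eq_bigr (fun h => (h == q.2)%:R * (q.1 == g + h)%:R)).
  by rewrite sum_delta eq_sym eqV_addr.
by move=> h _; rewrite !ffunE oppV (eq_sym q.2) mulrC.
Qed.

Lemma tmapE (f g : A -> A) (t : AA k) (p : V * V) :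
  tmap f g t p = \sum_q t q * (f (delta q.1) p.1 * g (delta q.2) p.2).
Proof. by rewrite /tmap sum_ffunE; apply: eq_bigr => q _; rewrite !ffunE. Qed.

Lemma mTE (t : AA k) (x : V) : mT t x = \sum_p t p * (x == p.1 + p.2)%:R.
Proof.
by rewrite /mT sum_ffunE; apply: eq_bigr => p _; rewrite ffunE gmul_delta ffunE.
Qed.

Lemma casimir_image (f : A -> A) :
  mT (tmap f id (comul (gunit k))) = \sum_v gmul (f (delta v)) (delta v).
Proof.
apply/ffunP => x; rewrite mTE sumVV sum_ffunE exchange_big /=.
apply: eq_bigr => v _; rewrite gmul_delta_r.
rewrite (eq_bigr (fun u => (u == x + v)%:R * f (delta v) u)) ?sum_delta //.
move=> u _; rewrite tmapE sumVV.
rewrite (eq_bigr (fun a => (a == v)%:R * f (delta a) u)); last first.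
  move=> a _; rewrite (eq_bigr (fun b => (b == v)%:R * ((a == v)%:R * f (delta a) u))).
    by rewrite sum_delta.
  move=> b _; rewrite /= comulE /gunit !ffunE addr_eq0 oppV (eq_sym v).
  by case: (eqVneq b v) => [->|_]; rewrite ?mul0r ?mulr0 //; ring.
by rewrite sum_delta mulrC eq_sym eqV_addr.
Qed.

Section LinearMaps.
Variable f : A -> A.
Hypothesis f_linear : is_linear f.

Lemma is_linear0 : f 0 = 0.
Proof.
have := f_linear (-1) 0 0.
have -> : sc (-1) (0 : A) + 0 = 0 by apply/ffunP => x; rewrite !ffunE mulr0 addr0.
by move=> ->; apply/ffunP => x; rewrite !ffunE mulN1r addNr.
Qed.

Lemma is_linearD (a b : A) : f (a + b) = f a + f b.
Proof.
have e1 (c : A) : sc 1 c = c by apply/ffunP => x; rewrite ffunE mul1r.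
by rewrite -{1}[a]e1 f_linear e1.
Qed.

Lemma is_linearZ (c : k) (a : A) : f (sc c a) = sc c (f a).
Proof. by rewrite -[sc c a]addr0 f_linear is_linear0 addr0. Qed.

Lemma is_linear_coord (a : A) (x : V) : f a x = \sum_v a v * f (delta v) x.
Proof.
have ea : a = \sum_v sc (a v) (delta v).
  apply/ffunP => y; rewrite sum_ffunE.
  rewrite (eq_bigr (fun v => (v == y)%:R * a v)) ?sum_delta //.
  by move=> v _; rewrite !ffunE (eq_sym y) mulrC.
rewrite {1}ea (big_morph f is_linearD is_linear0) sum_ffunE.
by apply: eq_bigr => v _; rewrite is_linearZ ffunE.
Qed.

End LinearMaps.

Section SignedPermutation.
Variables (pi : V -> V) (chi : V -> k) (f : A -> A).
Hypotheses (piK : involutive pi) (piD : {morph pi : u v / u + v}).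
Hypotheses (chiD : forall u v, chi (u + v) = chi u * chi v)
  (chi_sqr : forall v, chi v * chi v = 1) (chi_pi : forall v, chi (pi v) = chi v).
Hypotheses (f_linear : is_linear f) (f_delta : forall v, f (delta v) = sc (chi v) (delta (pi v))).

Lemma signed_perm_coord (a : A) (x : V) : f a x = chi (pi x) * a (pi x).
Proof.
rewrite (is_linear_coord f_linear).
rewrite (eq_bigr (fun v => (v == pi x)%:R * (a v * chi v))).
  by rewrite sum_delta mulrC.
move=> v _; rewrite f_delta !ffunE.
have -> : (x == pi v) = (v == pi x) by apply/eqP/eqP => [->|->]; rewrite piK.
ring.
Qed.

Lemma signed_perm_frobenius : frobenius_morphism f /\ involutive f.
Proof.
have pi0 : pi 0 = 0 by have := piD 0 0; rewrite addr0 addVV.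
have chi0 : chi 0 = 1 by rewrite -(chi_sqr 0) -chiD addr0.
have pi_eq0 x : (pi x == 0) = (x == 0).
  by apply/eqP/eqP => [h|->]; [rewrite -(piK x) h pi0 | rewrite pi0].
split; last by move=> a; apply/ffunP => x;
  rewrite !signed_perm_coord piK chi_pi mulrA chi_sqr mul1r.
split=> //.
- move=> a b; apply/ffunP => x; rewrite signed_perm_coord !ffunE mulr_sumr.
  rewrite (reindex_inj (can_inj piK)) /=.
  apply: eq_bigr => y _; rewrite !signed_perm_coord !oppV piD chiD.
  transitivity (chi (pi x) * (a (pi y) * b (pi x + pi y)) * (chi (pi y) * chi (pi y))).
    by rewrite chi_sqr mulr1.
  ring.
- apply/ffunP => x; rewrite signed_perm_coord /gunit !ffunE pi_eq0.
  by case: eqP => [->|_]; rewrite ?pi0 ?chi0 ?mulr0 ?mulr1.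
- move=> a; apply/ffunP => p; rewrite tmapE comulE sumVV signed_perm_coord piD chiD.
  rewrite (eq_bigr (fun q1 => (q1 == pi p.1)%:R *
      (chi (pi p.1) * (a (q1 + pi p.2) * chi (pi p.2))))).
    by rewrite sum_delta; ring.
  move=> q1 _.
  rewrite (eq_bigr (fun q2 => (q2 == pi p.2)%:R * ((q1 == pi p.1)%:R *
      (chi (pi p.1) * (a (q1 + q2) * chi (pi p.2)))))).
    by rewrite sum_delta.
  by move=> q2 _; rewrite comulE !signed_perm_coord !ffunE /= (eq_sym q1) (eq_sym q2); ring.
- by move=> a; rewrite !counitE signed_perm_coord pi0 chi0 mul1r.
Qed.

End SignedPermutation.

End Coordinates.

Definition signed (k : fieldType) (s : bool) (x : A k) : A k := if s then - x else x.

Section SignedBasis.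
Variable k : fieldType.
Hypothesis two_neq0 : (2 : k) != 0.

Lemma signedK (s : bool) : involutive (@signed k s).
Proof. by case: s => x //=; rewrite opprK. Qed.

Lemma gmulNl (x y : A k) : gmul (- x) y = - gmul x y.
Proof.
apply/ffunP => v; rewrite !ffunE -sumrN.
by apply: eq_bigr => w _; rewrite !ffunE mulNr.
Qed.

Lemma gmulNr (x y : A k) : gmul x (- y) = - gmul x y.
Proof.
apply/ffunP => v; rewrite !ffunE -sumrN.
by apply: eq_bigr => w _; rewrite !ffunE mulrN.
Qed.

Lemma gmul_signed (s t : bool) (x y : A k) :
  gmul (signed s x) (signed t y) = signed (s (+) t) (gmul x y).
Proof. by case: s t => [] []; rewrite /signed /= ?gmulNl ?gmulNr ?opprK. Qed.

Lemma gmul_gg (i j l : 'I_3) : distinct3 i j l -> gmul (gg k i) (gg k j) = gg k l.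
Proof. by move=> hd; rewrite /gg gmul_delta (gv_add hd). Qed.

Lemma signed_gg_inj (s t : bool) (a b : 'I_3) :
  signed s (gg k a) = signed t (gg k b) -> s = t /\ a = b.
Proof.
move=> /(congr1 (fun x : A k => x (gv a))); rewrite /signed.
have one_neqN1 : (1 : k) != -1 by rewrite -subr_eq0 opprK (_ : 1 + 1 = 2) // -natrD.
have [<-|ab] := eqVneq a b; case: s t => [] [];
  rewrite !ffunE ?eqxx ?(inj_eq gv_inj) ?(negbTE ab) /= ?oppr0 ?mulr1n ?mulr0n // => /eqP;
  by rewrite ?oppr_eq0 ?oner_eq0 ?(negbTE one_neqN1) // eq_sym (negbTE one_neqN1).
Qed.

End SignedBasis.

Section LabelledFourier.
Variables (k : fieldType) (i j l : 'I_3).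
Hypothesis hd : distinct3 i j l.
Local Notation A := (A k).

(* Evaluation of the four characters of V, indexed by their signs on g_i and g_j. *)
Definition fourier (a : A) (p : bool * bool) : k :=
  a 0 + sgn k p.1 * a (gv i) + sgn k p.2 * a (gv j) + sgn k p.1 * sgn k p.2 * a (gv l).

Lemma fourierD (a b : A) p : fourier (a + b) p = fourier a p + fourier b p.
Proof. by rewrite /fourier !ffunE; ring. Qed.

Lemma fourierN (a : A) p : fourier (- a) p = - fourier a p.
Proof. by rewrite /fourier !ffunE; ring. Qed.

Lemma fourierZ (c : k) (a : A) p : fourier (sc c a) p = c * fourier a p.
Proof. by rewrite /fourier !ffunE; ring. Qed.

Lemma fourier0 p : fourier 0 p = 0.
Proof. by rewrite /fourier !ffunE; ring. Qed.

Lemma fourier_sum (F : V -> A) p :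
  fourier (\sum_v F v) p = \sum_v fourier (F v) p.
Proof. exact: (big_morph (fourier^~ p) (fun a b => fourierD a b p) (fourier0 p)). Qed.

Let hij : i != j. Proof. by case: hd. Qed.
Let hjl : j != l. Proof. by case: hd. Qed.
Let hil : i != l. Proof. by case: hd. Qed.

Let gv_eqE :=
  (inj_eq gv_inj, negbTE (gv_neq0 i), negbTE (gv_neq0 j), negbTE (gv_neq0 l),
   negbTE hij, negbTE hjl, negbTE hil, eq_sym j i, eq_sym l j, eq_sym l i, @eq_sym V 0, eqxx).

Lemma fourier_e p : fourier (e k) p = 1.
Proof. by rewrite /fourier !ffunE !gv_eqE /= ?mulr0 ?mulr1 ?addr0 ?add0r. Qed.

Lemma fourier_gi p : fourier (gg k i) p = sgn k p.1.
Proof. by rewrite /fourier !ffunE !gv_eqE /= ?mulr0 ?mulr1 ?addr0 ?add0r. Qed.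

Lemma fourier_gj p : fourier (gg k j) p = sgn k p.2.
Proof. by rewrite /fourier !ffunE !gv_eqE /= ?mulr0 ?mulr1 ?addr0 ?add0r. Qed.

Lemma fourier_gl p : fourier (gg k l) p = sgn k p.1 * sgn k p.2.
Proof. by rewrite /fourier !ffunE !gv_eqE /= ?mulr0 ?mulr1 ?addr0 ?add0r. Qed.

Let gv_addE :=
  (gv_add hd, gv_add (distinct3C hd), gv_add (distinct3_rot hd),
   gv_add (distinct3C (distinct3_rot hd)), gv_add (distinct3_rot (distinct3_rot hd)),
   gv_add (distinct3C (distinct3_rot (distinct3_rot hd)))).

Lemma fourier_gmul (a b : A) p : fourier (gmul a b) p = fourier a p * fourier b p.
Proof.
rewrite /fourier !ffunE !(sumV_labelled _ hd) ?subr0 ?subrr ?sub0r ?oppV ?gv_addE.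
by case: p => [[] []]; rewrite /= ?sgn_false ?sgn_true; ring.
Qed.

Lemma fourier_inj (a b : A) : (2 : k) != 0 ->
  (forall p, fourier a p = fourier b p) -> a = b.
Proof.
move=> two_neq0 hab; apply/ffunP => v; apply: (mulfI (_ : (4 : k) != 0)).
  by rewrite (_ : 4 = 2 * 2) ?mulf_neq0 // -natrM.
have fourier_inv (c : A) : [/\
    4 * c 0 = fourier c (false, false) + fourier c (true, false)
              + fourier c (false, true) + fourier c (true, true),
    4 * c (gv i) = fourier c (false, false) - fourier c (true, false)
                   + fourier c (false, true) - fourier c (true, true),
    4 * c (gv j) = fourier c (false, false) + fourier c (true, false)
                   - fourier c (false, true) - fourier c (true, true) &
    4 * c (gv l) = fourier c (false, false) - fourier c (true, false)
                   - fourier c (false, true) + fourier c (true, true)].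
  by rewrite /fourier /= sgn_false sgn_true; split; ring.
have [a0 ai aj al] := fourier_inv a; have [b0 bi bj bl] := fourier_inv b.
by case: (V_labelled v hd) => ->; rewrite ?(a0, ai, aj, al, b0, bi, bj, bl) !hab.
Qed.

Lemma fourier_linear (f : A -> A) (a : A) p : is_linear f ->
  fourier (f a) p = a 0 * fourier (f (e k)) p + a (gv i) * fourier (f (gg k i)) p
                    + a (gv j) * fourier (f (gg k j)) p + a (gv l) * fourier (f (gg k l)) p.
Proof.
move=> f_linear.
have -> : f a = \sum_v sc (a v) (f (delta k v)).
  apply/ffunP => x; rewrite (is_linear_coord f_linear) sum_ffunE.
  by apply: eq_bigr => v _; rewrite ffunE.
by rewrite fourier_sum (sumV_labelled _ hd) !fourierZ.
Qed.

Lemma fourier_casimir (f : A -> A) p :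
  fourier (mT (tmap f id (comul (gunit k)))) p =
    fourier (f (e k)) p + sgn k p.1 * fourier (f (gg k i)) p
    + sgn k p.2 * fourier (f (gg k j)) p + sgn k p.1 * sgn k p.2 * fourier (f (gg k l)) p.
Proof.
rewrite casimir_image fourier_sum (sumV_labelled _ hd) !fourier_gmul.
by rewrite -[delta k 0]/(e k) fourier_e fourier_gi fourier_gj fourier_gl; ring.
Qed.

Lemma grouplike_signed (x : A) : (2 : k) != 0 -> gmul x x = e k -> x 0 = 0 ->
  exists s a, x = signed s (gg k a).
Proof.
move=> two_neq0 xx x0.
have coord v : gmul x x v = e k v by rewrite xx.
move: (coord 0) (coord (gv i)) (coord (gv j)) (coord (gv l)).
rewrite !ffunE !(sumV_labelled _ hd) ?subr0 ?subrr ?sub0r ?oppV ?gv_addE !gv_eqE x0 /= ?mulr1n.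
set b := x (gv i); set c := x (gv j); set d := x (gv l) => sum_sqr hi hj hl.
have half (y : k) : 2 * y = 0 -> y = 0 by move/eqP; rewrite mulf_eq0 (negbTE two_neq0) => /eqP.
have cd0 : c * d = 0 by apply: half; rewrite -[RHS]hi; ring.
have bd0 : b * d = 0 by apply: half; rewrite -[RHS]hj; ring.
have bc0 : b * c = 0 by apply: half; rewrite -[RHS]hl; ring.
have only (a : 'I_3) y : x (gv a) = y -> (forall v, v != gv a -> x v = 0) ->
    y ^+ 2 = 1 -> exists s a, x = signed s (gg k a).
  move=> xa others /sqr_eq1_sgn[s ys]; exists s, a; apply/ffunP => v.
  rewrite /signed; case: s ys; rewrite ?sgn_true ?sgn_false => ys; rewrite !ffunE;
  by have [->|neq] := eqVneq v (gv a); rewrite ?eqxx ?xa ?(others _ neq) ?(negbTE neq) ?ys ?oppr0.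
have zero_or (y z : k) : y * z = 0 -> y = 0 \/ z = 0.
  by move/eqP; rewrite mulf_eq0 => /orP[] /eqP; [left | right].
have [b0|c0] := zero_or _ _ bc0.
  have [c0|d0] := zero_or _ _ cd0.
    apply: (only l d) => // [v|]; last by rewrite expr2 -sum_sqr b0 c0; ring.
    by case: (V_labelled v hd) => ->; rewrite ?eqxx // => _; assumption.
  apply: (only j c) => // [v|]; last by rewrite expr2 -sum_sqr b0 d0; ring.
  by case: (V_labelled v hd) => ->; rewrite ?eqxx // => _; assumption.
have [b0|d0] := zero_or _ _ bd0.
  apply: (only l d) => // [v|]; last by rewrite expr2 -sum_sqr b0 c0; ring.
  by case: (V_labelled v hd) => ->; rewrite ?eqxx // => _; assumption.
apply: (only i b) => // [v|]; last by rewrite expr2 -sum_sqr c0 d0; ring.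
by case: (V_labelled v hd) => ->; rewrite ?eqxx // => _; assumption.
Qed.
End LabelledFourier.

Definition swapV (u1 u2 v : V) : V := if v == u1 then u2 else if v == u2 then u1 else v.

Definition chiL (k : fieldType) (u v : V) : k := if (v == 0) || (v == u) then 1 else -1.

Ltac V_enum := repeat match goal with
  | v : V |- _ => case: (V_cases v) => ->; clear v
  end.

Lemma swapV_add (u1 u2 : V) : u1 != 0 -> u2 != 0 -> u1 != u2 ->
  {morph swapV u1 u2 : x y / x + y}.
Proof. by move=> + + + x y; V_enum; move=> // *; apply/eqP. Qed.

Lemma swapV_involutive (u1 u2 : V) : involutive (swapV u1 u2).
Proof. by move=> v; V_enum; apply/eqP. Qed.

Lemma chiL_mul (k : fieldType) (u : V) : u != 0 ->
  forall x y : V, chiL k u (x + y) = chiL k u x * chiL k u y.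
Proof. by move=> + x y; V_enum; move=> // _; rewrite /chiL /=; ring. Qed.

Lemma chiL_sqr (k : fieldType) (u v : V) : chiL k u v * chiL k u v = 1.
Proof. by rewrite /chiL; case: ifP => _; rewrite ?mulr1 ?mulrNN ?mulr1. Qed.

Lemma chiL_swapV (k : fieldType) (i j l : 'I_3) (v : V) : distinct3 i j l ->
  chiL k (gv l) (swapV (gv i) (gv j) v) = chiL k (gv l) v.
Proof. by move=> hd; distinct3_cases i j l hd => *; V_enum. Qed.

(* The permutation of the characters [fourier i j l _ p] induced by the shape [sw tw]. *)
Definition tau (sw tw : bool) (p : bool * bool) : bool * bool :=
  let q := if sw then (p.2, p.1) else p in (q.1 (+) tw, q.2 (+) tw).

Lemma tauK (sw tw : bool) : involutive (tau sw tw).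
Proof. by case: sw tw => [] [] [[] []]. Qed.

Lemma tau_id (p : bool * bool) : tau false false p = p.
Proof. by case: p => [] [] []. Qed.

(* [sw] exchanges g_i and g_j, [tw] negates them, g_l is fixed; the shapes
   (false, false), (false, true), (true, false), (true, true) are the maps of
   cases (a), (b), (c), (d) of the theorem. *)
Definition shaped (k : fieldType) (phi : A k -> A k) (i j l : 'I_3) (sw tw : bool) :=
  lin_on_basis phi i j l (signed tw (gg k (if sw then j else i)))
    (signed tw (gg k (if sw then i else j))) (gg k l).

Section Shapes.
Variables (k : fieldType) (i j l : 'I_3) (phi : A k -> A k) (sw tw : bool).
Hypotheses (hd : distinct3 i j l) (phi_shaped : shaped phi i j l sw tw).

Lemma fourier_shaped (a : A k) p : fourier i j l (phi a) p = fourier i j l a (tau sw tw p).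
Proof.
have [phi_linear phi_e phi_i phi_j phi_l] := phi_shaped.
rewrite fourier_linear // phi_e phi_i phi_j phi_l fourier_e // fourier_gl //.
case: sw tw p => [] [] [[] []]; rewrite /signed /tau /= ?fourierN ?fourier_gi ?fourier_gj //;
  rewrite /fourier /= ?sgn_false ?sgn_true; ring.
Qed.

Lemma fourier_casimir_shaped p :
  fourier i j l (mT (tmap phi id (comul (gunit k)))) p = if tau sw tw p == p then 4 else 0.
Proof.
rewrite fourier_casimir // !fourier_shaped fourier_e // fourier_gi // fourier_gj // fourier_gl //.
by case: sw tw p => [] [] [[] []]; rewrite /tau /= ?sgn_false ?sgn_true; ring.
Qed.

Lemma shaped_frobenius : frobenius_morphism phi /\ involutive phi.
Proof.
have [phi_linear phi_e phi_i phi_j phi_l] := phi_shaped.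
have [hij hjl hil] := hd.
have gi0 := gv_neq0 i; have gj0 := gv_neq0 j; have gl0 := gv_neq0 l.
have gij : gv i != gv j by rewrite (inj_eq gv_inj).
pose pi := if sw then swapV (gv i) (gv j) else id.
pose chi := if tw then chiL k (gv l) else fun _ => 1.
apply: (@signed_perm_frobenius k pi chi phi _ _ _ _ _ phi_linear).
- by rewrite /pi; case: sw => //; apply: swapV_involutive.
- by rewrite /pi; case: sw => //; apply: swapV_add.
- by rewrite /chi; case: tw => //; [apply: chiL_mul | move=> *; rewrite mulr1].
- by rewrite /chi; case: tw => // *; rewrite ?chiL_sqr ?mulr1.
- by rewrite /chi /pi; case: tw; case: sw => // v; apply: chiL_swapV.
have [hji hlj hli] : [/\ j != i, l != j & l != i] by split; rewrite eq_sym.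
have g0 (x : 'I_3) : (0 == gv x) = false by rewrite eq_sym (negbTE (gv_neq0 x)).
move=> v; case: (V_labelled v hd) => ->; rewrite /pi /chi /swapV /chiL;
  case: sw tw phi_i phi_j => [] [] /= phi_i phi_j;
  rewrite -?[delta k 0]/(e k) -?[delta k (gv _)]/(gg k _) ?phi_e ?phi_i ?phi_j ?phi_l;
  rewrite ?eqxx ?g0 ?(negbTE (gv_neq0 _)) ?(inj_eq gv_inj) ?(negbTE hij) ?(negbTE hji)
    ?(negbTE hil) ?(negbTE hli) ?(negbTE hjl) ?(negbTE hlj) /=;
by apply/ffunP => x; rewrite !ffunE; ring.
Qed.

End Shapes.

(* Condition (iii) read through the Fourier transform. *)
Definition admissible (k : fieldType) (i j l : 'I_3) (sw tw : bool) (theta : A k) :=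
  forall p, fourier i j l theta p ^+ 2 = if tau sw tw p == p then 4 else 0.

Section Admissible.
Variables (k : fieldType) (i j l : 'I_3) (sw tw : bool) (theta : A k).
Hypothesis adm : admissible i j l sw tw theta.

Lemma admissible_moved p : tau sw tw p != p -> fourier i j l theta p = 0.
Proof. by move=> /negbTE moved; apply/eqP; rewrite -sqrf_eq0 adm moved. Qed.

Lemma admissible_fixed p : (2 : k) != 0 -> tau sw tw p = p ->
  exists s, fourier i j l theta p = 2 * sgn k s.
Proof. by move=> two_neq0 fixed; apply: sqr_eq4_sgn; rewrite // adm fixed eqxx. Qed.

End Admissible.

Lemma shaped_extended (k : fieldType) (i j l : 'I_3) (phi : A k -> A k) (sw tw : bool)
    (theta : A k) :
  (2 : k) != 0 -> distinct3 i j l -> shaped phi i j l sw tw ->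
  extended_structure phi theta <-> admissible i j l sw tw theta.
Proof.
move=> two_neq0 hd phi_shaped.
have casimir := fourier_casimir_shaped hd phi_shaped.
split=> [[_ _ theta_sqr] p | adm].
  by rewrite expr2 -(fourier_gmul hd) -theta_sqr casimir.
split; first exact: shaped_frobenius hd phi_shaped.
  move=> a; apply: (fourier_inj hd) => // p.
  rewrite (fourier_shaped hd phi_shaped) !(fourier_gmul hd).
  have [-> // | moved] := eqVneq (tau sw tw p) p.
  rewrite !(admissible_moved adm) ?mul0r // tauK.
  by rewrite eq_sym.
by apply: (fourier_inj hd) => // p; rewrite casimir (fourier_gmul hd) -expr2 adm.
Qed.

Section FrobeniusInvolution.
Variables (k : fieldType) (phi : A k -> A k).
Hypotheses (two_neq0 : (2 : k) != 0) (phi_frob : frobenius_morphism phi)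
  (phiK : involutive phi).

Let phi_linear : is_linear phi. Proof. by case: phi_frob. Qed.
Let phiM : forall a b, phi (gmul a b) = gmul (phi a) (phi b).
Proof. by case: phi_frob. Qed.

Lemma frobenius_signed (s : bool) (a : A k) : phi (signed s a) = signed s (phi a).
Proof.
case: s => //=; have /= := is_linearZ phi_linear (-1) a.
rewrite (_ : sc (-1) a = - a); last by apply/ffunP => v; rewrite !ffunE mulN1r.
by move=> ->; apply/ffunP => v; rewrite !ffunE mulN1r.
Qed.

Lemma frobenius_gg (a : 'I_3) : exists s b, phi (gg k a) = signed s (gg k b).
Proof.
have hd : distinct3 i0 i1 i2 by [].
have [_ _ phi_unit _ phi_counit] := phi_frob.
apply: (grouplike_signed hd) => //.
  by rewrite -phiM /gg gmul_delta addVV.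
by rewrite -counitE phi_counit counitE ffunE eq_sym (negbTE (gv_neq0 a)).
Qed.

Lemma frobenius_fix_third (x a y : 'I_3) (s : bool) : distinct3 x a y ->
  phi (gg k x) = signed s (gg k a) -> phi (gg k y) = gg k y.
Proof.
move=> hd phi_x.
have phi_a : phi (gg k a) = signed s (gg k x).
  by rewrite -[gg k x](phiK) phi_x frobenius_signed signedK.
rewrite -(gmul_gg k hd) phiM phi_x phi_a gmul_signed addbb /=.
by rewrite /gg !gmul_delta addrC.
Qed.

Lemma frobenius_fixed_label : exists l, phi (gg k l) = gg k l.
Proof.
have fix_third x : (exists s a, x != a /\ phi (gg k x) = signed s (gg k a)) ->
    exists l, phi (gg k l) = gg k l.
  move=> [s [a [xa phi_x]]]; have [y hd] := exists_distinct3 xa.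
  by exists y; apply: frobenius_fix_third hd phi_x.
have [s [a phi0]] := frobenius_gg i0.
have [a0|i0a] := eqVneq i0 a; last by apply: (fix_third i0); exists s, a.
rewrite -a0 in phi0; case: s phi0 => phi0; last by exists i0.
have [t [b phi1]] := frobenius_gg i1.
have [b1|i1b] := eqVneq i1 b; last by apply: (fix_third i1); exists t, b.
rewrite -b1 in phi1; case: t phi1 => phi1; last by exists i1.
exists i2; have hd : distinct3 i0 i1 i2 by [].
by rewrite -(gmul_gg k hd) phiM phi0 phi1 gmul_signed.
Qed.

Lemma frobenius_involution_shaped :
  exists i j l sw tw, distinct3 i j l /\ shaped phi i j l sw tw.
Proof.
have [_ _ phi_unit _ _] := phi_frob.
have [l phi_l] := frobenius_fixed_label.
have [i [j hd]] := exists_labelling l.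
have [s [a phi_i]] := frobenius_gg i.
have phi_j : phi (gg k j) = signed s (gmul (gg k l) (gg k a)).
  rewrite -(gmul_gg k (distinct3_rot (distinct3_rot hd))) phiM phi_l phi_i.
  by rewrite -[gg k l]/(signed false _) gmul_signed.
have hli := distinct3_rot (distinct3_rot hd); have hlj := distinct3C (distinct3_rot hd).
case: (label_cases a hd) => ai; subst a.
- exists i, j, l, false, s; do 2!split=> //.
  by rewrite phi_j (gmul_gg k hli).
- exists i, j, l, true, s; do 2!split=> //.
  by rewrite phi_j (gmul_gg k hlj).
- have [_ il] : false = s /\ i = l.
    apply: (@signed_gg_inj k) => //; apply: (can_inj phiK).
    by rewrite !frobenius_signed phi_l phi_i.
  by case: hd => _ _; rewrite il eqxx.
Qed.

End FrobeniusInvolution.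

Section ShapeClassification.
Variables (k : fieldType) (i j l : 'I_3).
Hypotheses (two_neq0 : (2 : k) != 0) (hd : distinct3 i j l).

Let fourierE := (fourierD, fourierN, fourierZ, fourier0, fourier_e k i j l,
  fourier_gi k hd, fourier_gj k hd, fourier_gl k hd, sgn_false k, sgn_true k).

Lemma shaped_idP (phi : A k -> A k) : shaped phi i j l false false <-> forall a, phi a = a.
Proof.
split=> [phi_shaped a | phi_id].
  by apply: (fourier_inj hd) => // p; rewrite (fourier_shaped hd phi_shaped) tau_id.
by split; rewrite ?phi_id // => c a b; rewrite !phi_id.
Qed.

Lemma theta_a_admissible (theta : A k) :
  theta_a i j l theta -> admissible i j l false false theta.
Proof.
move=> [s [t theta_eq]] p; rewrite tau_id eqxx.
by case: theta_eq => ->; rewrite !fourierE; case: s t p => [] [] [[] []]; rewrite /= ?fourierE; ring.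
Qed.

Ltac fourier_ext hd :=
  apply: (fourier_inj hd) => // -[[] []];
  repeat match goal with h : fourier _ _ _ ?t ?p = _ |- context [fourier _ _ _ ?t ?p] =>
    rewrite h end;
  rewrite !fourierE; ring.

Lemma admissible_theta_a (theta : A k) : admissible i j l false false theta ->
  exists i' j' l', distinct3 i' j' l' /\ theta_a i' j' l' theta.
Proof.
move=> adm; have coef p := admissible_fixed adm two_neq0 (tau_id p).
have [a hFF] := coef (false, false); have [b hTF] := coef (true, false).
have [c hFT] := coef (false, true); have [d hTT] := coef (true, true).
case: a b c d hFF hTF hFT hTT => [] [] [] [] hFF hTF hFT hTT.
- exists i, j, l; split; first exact: hd.
  by exists true, false; constructor 1; fourier_ext hd.
- exists i, j, l; split; first exact: hd.
  by exists true, true; constructor 4; fourier_ext hd.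
- exists i, j, l; split; first exact: hd.
  by exists true, false; constructor 3; fourier_ext hd.
- exists j, i, l; split; first exact: distinct3C hd.
  by exists true, false; constructor 2; fourier_ext hd.
- exists i, j, l; split; first exact: hd.
  by exists true, true; constructor 3; fourier_ext hd.
- exists i, j, l; split; first exact: hd.
  by exists true, false; constructor 2; fourier_ext hd.
- exists l, i, j; split; first exact: distinct3_rot (distinct3_rot hd).
  by exists true, false; constructor 2; fourier_ext hd.
- exists i, j, l; split; first exact: hd.
  by exists false, true; constructor 4; fourier_ext hd.
- exists i, j, l; split; first exact: hd.
  by exists true, false; constructor 4; fourier_ext hd.
- exists l, i, j; split; first exact: distinct3_rot (distinct3_rot hd).
  by exists false, false; constructor 2; fourier_ext hd.
- exists i, j, l; split; first exact: hd.
  by exists false, false; constructor 2; fourier_ext hd.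
- exists i, j, l; split; first exact: hd.
  by exists false, false; constructor 3; fourier_ext hd.
- exists j, i, l; split; first exact: distinct3C hd.
  by exists false, false; constructor 2; fourier_ext hd.
- exists i, j, l; split; first exact: hd.
  by exists false, true; constructor 3; fourier_ext hd.
- exists i, j, l; split; first exact: hd.
  by exists false, false; constructor 4; fourier_ext hd.
- exists i, j, l; split; first exact: hd.
  by exists false, false; constructor 1; fourier_ext hd.
Qed.

Lemma admissible_twistP (theta : A k) : admissible i j l false true theta <-> theta = 0.
Proof.
split=> [adm | -> p]; last by rewrite fourier0 expr2 mulr0; case: p => [] [] [].
by apply: (fourier_inj hd) => // p; rewrite fourier0 (admissible_moved adm) //; case: p => [] [] [].
Qed.

Lemma admissible_swapP (theta : A k) : admissible i j l true false theta <->
  exists s, theta = sc (sgn k s) (e k + gg k l) \/ theta = sc (sgn k s) (gg k i + gg k j).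
Proof.
split=> [adm | [s theta_eq] p].
  have [a hFF] := admissible_fixed adm (p := (false, false)) two_neq0 erefl.
  have [b hTT] := admissible_fixed adm (p := (true, true)) two_neq0 erefl.
  have hTF := admissible_moved adm (p := (true, false)) erefl.
  have hFT := admissible_moved adm (p := (false, true)) erefl.
  by exists a; case: a b hFF hTT => [] [] hFF hTT; [left | right | right | left]; fourier_ext hd.
by case: theta_eq => ->; case: s p => [] [[] []]; rewrite !fourierE /=; ring.
Qed.

Lemma admissible_swap_twistP (theta : A k) : admissible i j l true true theta <->
  exists s, theta = sc (sgn k s) (e k - gg k l) \/ theta = sc (sgn k s) (gg k i - gg k j).
Proof.
split=> [adm | [s theta_eq] p].
  have [a hFT] := admissible_fixed adm (p := (false, true)) two_neq0 erefl.
  have [b hTF] := admissible_fixed adm (p := (true, false)) two_neq0 erefl.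
  have hFF := admissible_moved adm (p := (false, false)) erefl.
  have hTT := admissible_moved adm (p := (true, true)) erefl.
  by exists a; case: a b hFT hTF => [] [] hFT hTF; [left | right | right | left]; fourier_ext hd.
by case: theta_eq => ->; case: s p => [] [[] []]; rewrite !fourierE /=; ring.
Qed.

End ShapeClassification.

Lemma classification_shapedP (k : fieldType) (phi : A k -> A k) (theta : A k) :
  (2 : k) != 0 ->
  classification phi theta <-> exists i j l sw tw,
    [/\ distinct3 i j l, shaped phi i j l sw tw & admissible i j l sw tw theta].
Proof.
move=> two_neq0; split.
  case=> [[phi_id [i [j [l [hd theta_adm]]]]] | [i [j [l [hd shape]]]]].
    exists i, j, l, false, false; split=> //; first exact/(shaped_idP two_neq0 hd).
    exact: theta_a_admissible.
  case: shape => [[phi_shaped theta_eq] | [phi_shaped theta_eq] | [phi_shaped theta_eq]].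
  - by exists i, j, l, false, true; split=> //; apply/(admissible_twistP two_neq0 hd).
  - by exists i, j, l, true, false; split=> //; apply/(admissible_swapP two_neq0 hd).
  - by exists i, j, l, true, true; split=> //; apply/(admissible_swap_twistP two_neq0 hd).
move=> [i [j [l [sw [tw [hd phi_shaped adm]]]]]].
case: sw tw phi_shaped adm => [] [] phi_shaped adm.
- right; exists i, j, l; split=> //; constructor 3.
  by split=> //; apply/(admissible_swap_twistP two_neq0 hd).
- right; exists i, j, l; split=> //; constructor 2.
  by split=> //; apply/(admissible_swapP two_neq0 hd).
- right; exists i, j, l; split=> //; constructor 1.
  by split=> //; apply/(admissible_twistP two_neq0 hd).
- left; split; first exact/(shaped_idP two_neq0 hd).
  exact: (admissible_theta_a two_neq0 hd).
Qed.

Theorem mainTheorem8 (k : closedFieldType) (hchar : [pchar k] =i pred0)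
    (phi : A k -> A k) (theta : A k) :
  extended_structure phi theta <-> classification phi theta.
Proof.
have two_neq0 : (2 : k) != 0 by rewrite ((pcharf0P k).1 hchar 2).
rewrite classification_shapedP //; split=> [ext | [i [j [l [sw [tw [hd phi_shaped adm]]]]]]].
  have [[phi_frob phiK] _ _] := ext.
  have [i [j [l [sw [tw [hd phi_shaped]]]]]] :=
    frobenius_involution_shaped two_neq0 phi_frob phiK.
  by exists i, j, l, sw, tw; split=> //; apply/(shaped_extended theta two_neq0 hd phi_shaped).
exact/(shaped_extended theta two_neq0 hd phi_shaped).
Qed.
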